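(* Let $(M_1,f_1,g_1)$ be an $(m,n)$-hypermodule over a commutative Krasner $(m,n)$-hyperring $(R_1,f'_1,g'_1)$ and $(M_2,f_2,g_2)$ an $(m,n)$-hypermodule over a commutative Krasner $(m,n)$-hyperring $(R_2,f'_2,g'_2)$, both with scalar identity $1$, and consider the $(m,n)$-hypermodule $(M_1\times M_2,f_1\times f_2,g_1\times g_2)$ over $(R_1\times R_2,f'_1\times f'_2,g'_1\times g'_2)$. Let $\phi:\mathcal{SH}(M_1\times M_2)\to\mathcal{SH}(M_1\times M_2)\cup\{\varnothing\}$ be a function. If $Q_1$ is an $n$-ary weakly classical prime subhypermodule of $M_1$ with $\{0\}\times M_2\subseteq\phi(Q_1\times M_2)$, then $Q_1\times M_2$ is an $n$-ary $\phi$-classical prime subhypermodule of $M_1\times M_2$.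
   Context: A commutative Krasner $(m,n)$-hyperring with scalar identity $1$ is a triple $(R,f',g')$ where $(R,f')$ is a canonical $m$-ary hypergroup with zero $0$, $(R,g')$ is a commutative $n$-ary semigroup, $g'$ is distributive over $f'$, $0$ is a zero element for $g'$, and $g'(x,1^{(n-1)})=x$. Notation: $x_i^j$ denotes $x_i,\dots,x_j$ and $x^{(k)}$ denotes $x$ repeated $k$ times. An $(m,n)$-hypermodule over $R$ is a triple $(M,f,g)$ with $(M,f)$ a canonical $m$-ary hypergroup with zero $0$ and $g:R^{n-1}\times M\to P^*(M)$ satisfying: $g(r_1^{n-1},f(x_1^m))=f(g(r_1^{n-1},x_1),\dots,g(r_1^{n-1},x_m))$; $g(r_1^{i-1},f'(s_1^m),r_{i+1}^{n-1},x)=f(g(r_1^{i-1},s_1,r_{i+1}^{n-1},x),\dots,g(r_1^{i-1},s_m,r_{i+1}^{n-1},x))$; $g(r_1^{i-1},g'(r_i^{i+n-1}),r_{i+n}^{2n-2},x)=g(r_1^{n-1},g(r_n^{2n-2},x))$; $g(r_1^{i-1},0,r_{i+1}^{n-1},x)=\{0\}$; moreover $g(1^{(n-1)},a)=\{a\}$. A subhypermodule is a nonempty $N\subseteq M$ with $(N,f)$ an $m$-ary subhypergroup and $g(R^{(n-1)},N)\subseteq N$; $\mathcal{SH}(M)$ is the set of subhypermodules. The product hyperring has componentwise operations, with identity $(1,1)$. On $M_1\times M_2$: $f_1\times f_2((a_1,b_1),\dots,(a_m,b_m))=\{(x_1,x_2):x_1\in f_1(a_1^m),x_2\in f_2(b_1^m)\}$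 and $g_1\times g_2((r_1,s_1),\dots,(r_{n-1},s_{n-1}),(a,b))=\{(y_1,y_2):y_1\in g_1(r_1^{n-1},a),y_2\in g_2(s_1^{n-1},b)\}$. A proper subhypermodule $Q$ of $M$ is $n$-ary weakly classical prime if $0\notin g(r_1^{n-1},a)\subseteq Q$ implies $g(r_i,1^{(n-2)},a)\subseteq Q$ for some $1\le i\le n-1$; given $\phi$ on subhypermodules, $Q$ is $n$-ary $\phi$-classical prime if $g(r_1^{n-1},a)\subseteq Q\setminus\phi(Q)$ implies $g(r_i,1^{(n-2)},a)\subseteq Q$ for some $i$ (applied to $M_1\times M_2$ with its operations and identity $(1,1)$). *)

From mathcomp Require Import all_boot.
Set Implicit Arguments. Unset Strict Implicit. Unset Printing Implicit Defensive.

Definition hset (T : Type) := T -> Prop.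
Definition hsub T (A B : hset T) := forall x, A x -> B x.
Definition hseteq T (A B : hset T) := forall x, A x <-> B x.
Definition hsingle T (a : T) : hset T := fun z => z = a.

Definition hop (T : Type) (k : nat) := ('I_k -> T) -> hset T.

Definition hop_sets T k (f : hop T k) (A : 'I_k -> hset T) : hset T :=
  fun z => exists a : 'I_k -> T, (forall j, A j (a j)) /\ f a z.

Definition window T k (x : nat -> T) (off : nat) : 'I_k -> T :=
  fun j => x (off + j).

(** x_0..x_{i-1}, y, x_{i+l}, x_{i+l+1}, ... (k entries): the block of
    length l starting at i is replaced by y. *)
Definition splice T k (x : nat -> T) (i l : nat) (y : T) : 'I_k -> T :=
  fun j => if (j : nat) < i then x j
           else if (j : nat) == i then y else x (j + l - 1).

Definition upd T k (x : 'I_k -> T) (i : 'I_k) (y : T) : 'I_k -> T :=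
  fun j => if j == i then y else x j.

Definition first_then T k (a e : T) : 'I_k -> T :=
  fun j => if (j : nat) == 0 then a else e.

Definition hconst T k (e : T) : 'I_k -> T := fun _ => e.

Arguments window {T} k x off.
Arguments splice {T} k x i l y.
Arguments first_then {T} k a e.
Arguments hconst {T} k e.

Section HyperGroup.
Variables (T : Type) (m : nat) (f : hop T m).

Definition hop_nonempty := forall x, exists z, f x z.

(** f(x_1^{i-1}, f(x_i^{m+i-1}), x_{m+i}^{2m-1}) = f(x_1^{m-1}, f(x_m^{2m-1})) *)
Definition hop_assoc := forall (x : nat -> T) (i : nat), i < m ->
  hseteq (fun z => exists y, f (window m x i) y /\ f (splice m x i m y) z)
         (fun z => exists y, f (window m x m.-1) y /\ f (splice m x m.-1 m y) z).

Definition hop_comm := forall (x : 'I_m -> T) (s : 'I_m -> 'I_m),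
  bijective s -> hseteq (f (fun j => x (s j))) (f x).

(** f(x_1^{i-1}, H, x_{i+1}^m) = H *)
Definition hop_reproductive := forall (x : 'I_m -> T) (i : 'I_m) (z : T),
  exists y, f (upd x i y) z.

Definition hop_scalar_identity (e : T) := forall x, hseteq (f (first_then m x e)) (hsingle x).

Definition hop_is_inv (e x y : T) : Prop :=
  f (fun j : 'I_m => if (j : nat) == 0 then x else if (j : nat) == 1 then y else e) e.

Definition canonical_hypergroup (e : T) : Prop :=
  [/\ hop_nonempty /\ hop_assoc, hop_comm /\ hop_reproductive,
      hop_scalar_identity e /\ (forall e', hop_scalar_identity e' -> e' = e),
      (forall x, exists y, hop_is_inv e x y /\ forall y', hop_is_inv e x y' -> y' = y) &
      (* if x \in f(x_1^m) then x_i \in f(x, x_1^{-1},..,x_{i-1}^{-1},x_{i+1}^{-1},..,x_m^{-1}) *)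
      (forall (x : T) (a : 'I_m -> T) (b : nat -> T),
         f a x -> (forall j : 'I_m, hop_is_inv e (a j) (b j)) ->
         forall i : 'I_m,
           f (fun j : 'I_m => if (j : nat) == 0 then x
                              else if (j : nat) <= i then b (j.-1) else b j) (a i))].

Definition subhypergroup (N : hset T) : Prop :=
  [/\ exists x, N x,
      (forall x : 'I_m -> T, (forall j, N (x j)) -> hsub (f x) N) &
      (forall (x : 'I_m -> T) (i : 'I_m) (z : T), (forall j, N (x j)) -> N z ->
         exists y, N y /\ f (upd x i y) z)].
End HyperGroup.

Definition krasner_hyperring (R : Type) (m n : nat) (f' : hop R m)
    (g' : ('I_n -> R) -> R) (zero one : R) : Prop :=
  [/\ canonical_hypergroup f' zero /\
      (forall (x : nat -> R) (i : nat), i < n ->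
         g' (splice n x i n (g' (window n x i))) =
         g' (splice n x n.-1 n (g' (window n x n.-1)))),
      (forall (x : 'I_n -> R) (s : 'I_n -> 'I_n), bijective s -> g' (fun j => x (s j)) = g' x),
      (forall (x : 'I_n -> R) (i : 'I_n) (y : 'I_m -> R),
         hseteq (fun z => exists w, f' y w /\ z = g' (upd x i w))
                (f' (fun k => g' (upd x i (y k))))),
      (forall (x : 'I_n -> R) (i : 'I_n), g' (upd x i zero) = zero) &
      (forall x, g' (first_then n x one) = x)].

Definition hypermodule (R M : Type) (m n : nat) (f' : hop R m)
    (g' : ('I_n -> R) -> R) (zeroR oneR : R)
    (f : hop M m) (g : ('I_n.-1 -> R) -> M -> hset M) (zeroM : M) : Prop :=
  [/\ canonical_hypergroup f zeroM /\
      (forall r a, exists z, g r a z),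
      (forall (r : 'I_n.-1 -> R) (x : 'I_m -> M),
         hseteq (fun z => exists y, f x y /\ g r y z) (hop_sets f (fun k => g r (x k)))),
      (forall (r : 'I_n.-1 -> R) (i : 'I_n.-1) (s : 'I_m -> R) (x : M),
         hseteq (fun z => exists w, f' s w /\ g (upd r i w) x z)
                (hop_sets f (fun k => g (upd r i (s k)) x))),
      (forall (r : nat -> R) (i : nat) (x : M), i < n.-1 ->
         hseteq (g (splice n.-1 r i n (g' (window n r i))) x)
                (fun z => exists y, g (window n.-1 r n.-1) x y /\ g (window n.-1 r 0) y z)) /\
      (forall (r : 'I_n.-1 -> R) (i : 'I_n.-1) (x : M),
         hseteq (g (upd r i zeroR) x) (hsingle zeroM)) &
      (forall a, hseteq (g (hconst n.-1 oneR) a) (hsingle a))].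

Section SubModules.
Variables (R M : Type) (m n : nat) (f : hop M m) (g : ('I_n.-1 -> R) -> M -> hset M).

Definition subhypermodule (N : hset M) : Prop :=
  subhypergroup f N /\ (forall r a, N a -> hsub (g r a) N).

Definition proper_set (N : hset M) : Prop := exists a, ~ N a.

Definition weakly_classical_prime (zeroM : M) (oneR : R) (Q : hset M) : Prop :=
  [/\ subhypermodule Q, proper_set Q &
      forall (r : 'I_n.-1 -> R) (a : M), ~ g r a zeroM -> hsub (g r a) Q ->
        exists i : 'I_n.-1, hsub (g (first_then n.-1 (r i) oneR) a) Q].

Definition phi_classical_prime (oneR : R) (phi : hset M -> hset M) (Q : hset M) : Prop :=
  [/\ subhypermodule Q, proper_set Q &
      forall (r : 'I_n.-1 -> R) (a : M), hsub (g r a) (fun z => Q z /\ ~ phi Q z) ->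
        exists i : 'I_n.-1, hsub (g (first_then n.-1 (r i) oneR) a) Q].
End SubModules.

Definition prod_hop T1 T2 k (f1 : hop T1 k) (f2 : hop T2 k) : hop (T1 * T2) k :=
  fun x z => f1 (fun j => (x j).1) z.1 /\ f2 (fun j => (x j).2) z.2.

Definition prod_act R1 R2 M1 M2 k (g1 : ('I_k -> R1) -> M1 -> hset M1)
    (g2 : ('I_k -> R2) -> M2 -> hset M2) : ('I_k -> R1 * R2) -> M1 * M2 -> hset (M1 * M2) :=
  fun r a z => g1 (fun j => (r j).1) a.1 z.1 /\ g2 (fun j => (r j).2) a.2 z.2.

From mathcomp Require Import all_boot.
From Stdlib Require Import FunctionalExtensionality.

(* Since [Q1 x M2] puts no constraint on the second coordinate, everything
   reduces to the first one.  If [g(r, a)] avoids [phi(Q1 x M2)], which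
   contains [{0} x M2], then [g1(r.1, a.1)] lies in [Q1] and avoids [0], so
   weak classical primeness of [Q1] yields the required index. *)

Section ProjectionsOfTuples.
Variables (T1 T2 : Type) (k : nat).

Lemma upd_fst (x : 'I_k -> T1 * T2) (i : 'I_k) (y : T1 * T2) :
  (fun j => (upd x i y j).1) = upd (fun j => (x j).1) i y.1.
Proof. by apply: functional_extensionality => j; rewrite /upd; case: (j == i). Qed.

Lemma upd_snd (x : 'I_k -> T1 * T2) (i : 'I_k) (y : T1 * T2) :
  (fun j => (upd x i y j).2) = upd (fun j => (x j).2) i y.2.
Proof. by apply: functional_extensionality => j; rewrite /upd; case: (j == i). Qed.

Lemma first_then_fst (a e : T1 * T2) :
  (fun j => (first_then k a e j).1) = first_then k a.1 e.1.
Proof. by apply: functional_extensionality => j; rewrite /first_then; case: (_ == 0). Qed.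

End ProjectionsOfTuples.

Section FirstFactorTimesWhole.
Variables (R1 R2 M1 M2 : Type) (m n : nat).
Variables (f1 : hop M1 m) (f2 : hop M2 m).
Variables (g1 : ('I_n.-1 -> R1) -> M1 -> hset M1) (g2 : ('I_n.-1 -> R2) -> M2 -> hset M2).

Lemma subhypergroup_prodl (N1 : hset M1) (b : M2) :
  subhypergroup f1 N1 -> hop_reproductive f2 ->
  subhypergroup (prod_hop f1 f2) (fun z => N1 z.1).
Proof.
move=> [[a Na] closedN reprN] repr2; split.
- by exists (a, b).
- by move=> x Nx z [f1z _]; apply: closedN Nx _ f1z.
- move=> x i z Nx Nz.
  have [y1 [Ny1 f1y1]] := reprN (fun j => (x j).1) i z.1 Nx Nz.
  have [y2 f2y2] := repr2 (fun j => (x j).2) i z.2.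
  by exists (y1, y2); split; [|split; rewrite ?upd_fst ?upd_snd].
Qed.

Lemma subhypermodule_prodl (N1 : hset M1) (b : M2) :
  subhypermodule f1 g1 N1 -> hop_reproductive f2 ->
  subhypermodule (prod_hop f1 f2) (prod_act g1 g2) (fun z => N1 z.1).
Proof.
move=> [groupN closedN] repr2; split; first exact: subhypergroup_prodl.
by move=> r a Na z [g1z _]; apply: closedN Na _ g1z.
Qed.

Lemma proper_set_prodl (N1 : hset M1) (b : M2) :
  proper_set N1 -> proper_set (fun z : M1 * M2 => N1 z.1).
Proof. by move=> [a Na]; exists (a, b). Qed.

Lemma classical_prime_prodl (z1 : M1) (o1 : R1) (o2 : R2) (Q1 : hset M1)
    (P : hset (M1 * M2)) :
  weakly_classical_prime f1 g1 z1 o1 Q1 ->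
  (forall r a, exists z, g2 r a z) ->
  hsub (fun z => z.1 = z1) P ->
  forall r a, hsub (prod_act g1 g2 r a) (fun z => Q1 z.1 /\ ~ P z) ->
  exists i, hsub (prod_act g1 g2 (first_then n.-1 (r i) (o1, o2)) a) (fun z => Q1 z.1).
Proof.
move=> [_ _ primeQ1] act2 zeroP r a sub_gra.
have [w g2w] := act2 (fun j => (r j).2) a.2.
have nz1 : ~ g1 (fun j => (r j).1) a.1 z1.
  by move=> g1z1; have [_] := sub_gra (z1, w) (conj g1z1 g2w); apply; apply: zeroP.
have sub1 : hsub (g1 (fun j => (r j).1) a.1) Q1.
  by move=> y g1y; have [] := sub_gra (y, w) (conj g1y g2w).
have [i sub_i] := primeQ1 _ _ nz1 sub1.
by exists i => z [g1z _]; apply: sub_i; rewrite first_then_fst in g1z.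
Qed.

End FirstFactorTimesWhole.

Theorem mainTheorem17 (m n : nat) (R1 R2 M1 M2 : Type)
  (f'1 : hop R1 m) (g'1 : ('I_n -> R1) -> R1) (zR1 oR1 : R1)
  (f'2 : hop R2 m) (g'2 : ('I_n -> R2) -> R2) (zR2 oR2 : R2)
  (f1 : hop M1 m) (g1 : ('I_n.-1 -> R1) -> M1 -> hset M1) (z1 : M1)
  (f2 : hop M2 m) (g2 : ('I_n.-1 -> R2) -> M2 -> hset M2) (z2 : M2)
  (phi : hset (M1 * M2) -> hset (M1 * M2)) (Q1 : hset M1) :
  2 <= m -> 2 <= n ->
  krasner_hyperring f'1 g'1 zR1 oR1 ->
  krasner_hyperring f'2 g'2 zR2 oR2 ->
  hypermodule f'1 g'1 zR1 oR1 f1 g1 z1 ->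
  hypermodule f'2 g'2 zR2 oR2 f2 g2 z2 ->
  (* phi : SH(M1 x M2) -> SH(M1 x M2) \cup {emptyset} *)
  (forall N : hset (M1 * M2), subhypermodule (prod_hop f1 f2) (prod_act g1 g2) N ->
     (forall z, ~ phi N z) \/ subhypermodule (prod_hop f1 f2) (prod_act g1 g2) (phi N)) ->
  weakly_classical_prime f1 g1 z1 oR1 Q1 ->
  hsub (fun z : M1 * M2 => z.1 = z1) (phi (fun z : M1 * M2 => Q1 z.1)) ->
  phi_classical_prime (prod_hop f1 f2) (prod_act g1 g2) (oR1, oR2) phi
    (fun z : M1 * M2 => Q1 z.1).
Proof.
move=> _ _ _ _ _ [[[_ [_ repr2] _ _ _] act2] _ _ _ _] _ primeQ1 zero_phi.
have [subQ1 properQ1 _] := primeQ1.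
split.
- exact: subhypermodule_prodl z2 subQ1 repr2.
- exact: proper_set_prodl z2 properQ1.
- exact: classical_prime_prodl primeQ1 act2 zero_phi.
Qed.
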